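(* Let $A$ be the weighted shift on $\mathcal{H}$ with weights $\{1/n\}_{n\ge1}$. Then for all $t>0$ and $r>0$, \[\frac{\sqrt6}{\pi r}(e^{rt}-1)\le\Bigl\|\Bigl(\frac1t-rA\Bigr)^{-1}\Bigr\|\le te^{rt}.\]
   Context: $\mathcal{H}$ is a separable infinite-dimensional complex Hilbert space with orthonormal basis $\{e_n\}_{n=0}^\infty$, and $A$ is defined by $Ae_n=\frac{1}{n+1}e_{n+1}$ for $n\ge0$ (so its matrix has subdiagonal entries $1,\frac12,\frac13,\dots$). *)

From Stdlib Require Import Reals.
From Coquelicot Require Import Coquelicot.
Open Scope R_scope.

(* The Hilbert space H is modelled as l^2(N, C): e_n is the n-th unit sequence. *)
Definition seqC := nat -> C.

Definition l2 (x : seqC) : Prop := ex_series (fun n => (Cmod (x n)) ^ 2).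

Definition l2norm (x : seqC) : R := sqrt (Series (fun n => (Cmod (x n)) ^ 2)).

(* Weighted shift: A e_n = 1/(n+1) e_{n+1}, i.e. (A x)_0 = 0, (A x)_{k+1} = x_k / (k+1). *)
Definition shiftA (x : seqC) : seqC :=
  fun n => match n with
           | O => RtoC 0
           | S k => Cdiv (x k) (RtoC (INR (S k)))
           end.

Definition opB (t r : R) (x : seqC) : seqC :=
  fun n => Cminus (Cmult (RtoC (/ t)) (x n)) (Cmult (RtoC r) (shiftA x n)).

Definition opnorm (T : seqC -> seqC) : Rbar :=
  Lub_Rbar (fun y => exists x, l2 x /\ l2norm x <= 1 /\ y = l2norm (T x)).

(* With c = r t, the inverse S of 1/t - r A is computed by forward substitution,
   (S x)_m = t \sum_{j <= m} c^(m-j) j!/m! x_j, and its kernel is dominated by the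
   exponential weights c^k/k!; Young's inequality for this convolution gives
   ||S|| <= t e^c.  For the lower bound, S e_0 = t (c^n/n!)_n, so it suffices that
   \sum_n (c^n/n!)^2 >= (6/pi^2) ((e^c - 1)/c)^2.  Writing (e^c - 1)/c = \sum_n
   (c^n/n!)/(n+1), Cauchy-Schwarz against (1/(n+1))_n would need Basel's sum; but
   6/pi^2 <= 0.61 while the ratio of the two sides never drops below 0.74, so
   Cauchy-Schwarz against a finite section of (1/(n+1))_n (for c <= 2.1) or against
   the geometric sequence ((1 - 1/(2c))^n)_n (for c >= 2.1) is enough. *)

From Stdlib Require Import Reals.
From Coquelicot Require Import Coquelicot.
Open Scope R_scope.
From Stdlib Require Import Lra Lia Factorial FunctionalExtensionality.

Lemma Un_cv_le_const (u : nat -> R) (l M : R) :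
  Un_cv u l -> (forall n, u n <= M) -> l <= M.
Proof.
  intros Hu Hb. apply is_lim_seq_Reals in Hu.
  exact (is_lim_seq_le u (fun _ => M) l M Hb Hu (is_lim_seq_const M)).
Qed.

Lemma sum_f_R0_le_Series (a : nat -> R) (N : nat) :
  (forall n, 0 <= a n) -> ex_series a -> sum_f_R0 a N <= Series a.
Proof.
  intros Ha Hex. apply sum_incr; [|exact Ha].
  apply is_series_Reals, Series_correct, Hex.
Qed.

Lemma sum_f_R0_Cauchy_Schwarz (u v : nat -> R) (N : nat) :
  sum_f_R0 (fun k => u k * v k) N ^ 2 <=
  sum_f_R0 (fun k => u k ^ 2) N * sum_f_R0 (fun k => v k ^ 2) N.
Proof.
  induction N as [|N IH]; cbn [sum_f_R0]; [right; ring|].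
  set (P := sum_f_R0 (fun k => u k * v k) N) in *.
  set (A := sum_f_R0 (fun k => u k ^ 2) N) in *.
  set (B := sum_f_R0 (fun k => v k ^ 2) N) in *.
  set (x := u (S N)); set (y := v (S N)).
  assert (HA : 0 <= A) by (apply cond_pos_sum; intros; apply pow2_ge_0).
  assert (HB : 0 <= B) by (apply cond_pos_sum; intros; apply pow2_ge_0).
  (* (2 P x y)^2 <= 4 A B x^2 y^2 <= (A y^2 + B x^2)^2 *)
  assert (Hcross : 2 * P * (x * y) <= A * y ^ 2 + B * x ^ 2).
  { assert (Hsq : (2 * P * (x * y)) ^ 2 <= (A * y ^ 2 + B * x ^ 2) ^ 2).
    { assert (P ^ 2 * (x * y) ^ 2 <= A * B * (x * y) ^ 2)
        by (apply Rmult_le_compat_r; [apply pow2_ge_0 | exact IH]).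
      pose proof (pow2_ge_0 (A * y ^ 2 - B * x ^ 2)). nra. }
    assert (0 <= A * y ^ 2 + B * x ^ 2)
      by (pose proof (pow2_ge_0 x); pose proof (pow2_ge_0 y); nra).
    nra. }
  nra.
Qed.

Lemma sum_f_R0_weighted_sq_le (p a : nat -> R) (N : nat) :
  (forall k, 0 <= p k) ->
  sum_f_R0 (fun k => p k * a k) N ^ 2 <=
  sum_f_R0 p N * sum_f_R0 (fun k => p k * a k ^ 2) N.
Proof.
  intros Hp.
  pose proof (sum_f_R0_Cauchy_Schwarz (fun k => sqrt (p k)) (fun k => sqrt (p k) * a k) N) as H.
  rewrite (sum_eq _ (fun k => p k * a k)) in H
    by (intros k _; rewrite <- Rmult_assoc, sqrt_sqrt by apply Hp; reflexivity).
  rewrite (sum_eq (fun k => sqrt (p k) ^ 2) p) in H by (intros k _; apply pow2_sqrt, Hp).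
  rewrite (sum_eq (fun k => (sqrt (p k) * a k) ^ 2) (fun k => p k * a k ^ 2)) in H
    by (intros k _; rewrite Rpow_mult_distr, pow2_sqrt by apply Hp; reflexivity).
  exact H.
Qed.

Lemma sum_f_R0_rev (f : nat -> R) (m : nat) :
  sum_f_R0 (fun j => f (m - j)%nat) m = sum_f_R0 f m.
Proof.
  induction m as [|m IH]; [reflexivity|].
  rewrite (decomp_sum _ (S m)) by lia. cbn [pred]. rewrite Nat.sub_0_r.
  rewrite (sum_eq (fun i => f (S m - S i)%nat) (fun j => f (m - j)%nat)) by reflexivity.
  rewrite IH. cbn [sum_f_R0]. ring.
Qed.

Definition exp_term (c : R) (n : nat) : R := / INR (fact n) * c ^ n.

Lemma exp_term_0 (c : R) : exp_term c 0 = 1.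
Proof. unfold exp_term. simpl. field. Qed.

Lemma exp_term_S (c : R) (n : nat) : exp_term c (S n) = c / INR (S n) * exp_term c n.
Proof.
  unfold exp_term. rewrite fact_simpl, mult_INR. cbn [pow].
  pose proof (lt_0_INR (fact n) (lt_O_fact n)).
  pose proof (lt_0_INR (S n) (Nat.lt_0_succ n)).
  field. lra.
Qed.

Lemma exp_term_nonneg (c : R) (n : nat) : 0 <= c -> 0 <= exp_term c n.
Proof.
  intros Hc. apply Rmult_le_pos; [|now apply pow_le].
  apply Rlt_le, Rinv_0_lt_compat, lt_0_INR, lt_O_fact.
Qed.

Lemma exp_term_mult (c s : R) (n : nat) : exp_term (c * s) n = exp_term c n * s ^ n.
Proof. unfold exp_term. rewrite Rpow_mult_distr. ring. Qed.

Lemma sum_exp_term_le_exp (c : R) (N : nat) :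
  0 <= c -> sum_f_R0 (exp_term c) N <= exp c.
Proof. intros Hc. apply sum_incr; [apply E1_cvg | intros; now apply exp_term_nonneg]. Qed.

Lemma exp_term_le_exp (c : R) (n : nat) : 0 <= c -> exp_term c n <= exp c.
Proof.
  intros Hc. eapply Rle_trans; [|apply (sum_exp_term_le_exp c n Hc)].
  destruct n as [|n]; cbn [sum_f_R0]; [lra|].
  pose proof (cond_pos_sum (exp_term c) n (fun k => exp_term_nonneg c k Hc)). lra.
Qed.

(* Past index [N] the terms decrease at least geometrically with ratio 1/2. *)
Lemma exp_le_sum_exp_term (c : R) (N : nat) :
  0 <= c -> 2 * c <= INR N + 2 ->
  exp c <= sum_f_R0 (exp_term c) N + 2 * exp_term c (S N).
Proof.
  intros Hc HN.
  assert (Hdecr : forall k, sum_f_R0 (exp_term c) (k + N) + 2 * exp_term c (S (k + N))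
                            <= sum_f_R0 (exp_term c) N + 2 * exp_term c (S N)).
  { induction k as [|k IH]; [cbn [Nat.add]; lra|].
    cbn [Nat.add sum_f_R0]. rewrite (exp_term_S c (S (k + N))).
    assert (Hratio : c / INR (S (S (k + N))) <= 1 / 2).
    { assert (INR N <= INR (k + N)) by (apply le_INR; lia).
      pose proof (pos_INR (k + N)).
      rewrite !S_INR. apply Rmult_le_reg_r with (INR (k + N) + 1 + 1); [lra|].
      unfold Rdiv. rewrite Rmult_assoc, Rinv_l by lra. lra. }
    pose proof (exp_term_nonneg c (S (k + N)) Hc). nra. }
  apply (Un_cv_le_const (fun k => sum_f_R0 (exp_term c) (k + N))).
  - apply (CV_shift' (E1 c)), E1_cvg.
  - intros k. pose proof (Hdecr k). pose proof (exp_term_nonneg c (S (k + N)) Hc). lra.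
Qed.

Definition exp_sq_series (c : R) : R := Series (fun n => exp_term c n ^ 2).

Lemma ex_series_exp_term_sq (c : R) : 0 <= c -> ex_series (fun n => exp_term c n ^ 2).
Proof.
  intros Hc.
  apply (@ex_series_le R_AbsRing R_CompleteNormedModule _ (fun n => exp_term c n * exp c)).
  - intros n. change (norm (exp_term c n ^ 2)) with (Rabs (exp_term c n ^ 2)).
    rewrite Rabs_pos_eq by apply pow2_ge_0.
    pose proof (exp_term_nonneg c n Hc). pose proof (exp_term_le_exp c n Hc). nra.
  - apply ex_series_scal_r. exists (exp c). apply is_series_Reals, E1_cvg.
Qed.

Lemma exp_sq_series_nonneg (c : R) : 0 <= c -> 0 <= exp_sq_series c.
Proof.
  intros Hc. eapply Rle_trans; [|apply (sum_f_R0_le_Series _ 0)].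
  - apply pow2_ge_0.
  - intros; apply pow2_ge_0.
  - now apply ex_series_exp_term_sq.
Qed.

Lemma sum_mul_exp_term_sq_le (c : R) (v : nat -> R) (N : nat) :
  0 <= c ->
  sum_f_R0 (fun n => exp_term c n * v n) N ^ 2 <=
  exp_sq_series c * sum_f_R0 (fun n => v n ^ 2) N.
Proof.
  intros Hc. eapply Rle_trans; [apply sum_f_R0_Cauchy_Schwarz|].
  apply Rmult_le_compat_r; [apply cond_pos_sum; intros; apply pow2_ge_0|].
  apply sum_f_R0_le_Series; [intros; apply pow2_ge_0 | now apply ex_series_exp_term_sq].
Qed.

Lemma exp_sq_series_ge_geometric (c s : R) :
  0 <= c -> 0 <= s < 1 -> (1 - s ^ 2) * exp (c * s) ^ 2 <= exp_sq_series c.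
Proof.
  intros Hc Hs.
  assert (Hgeom : forall N, sum_f_R0 (fun n => (s ^ n) ^ 2) N <= / (1 - s ^ 2)).
  { intros N. rewrite (sum_eq _ (fun n => (s ^ 2) ^ n))
      by (intros n _; rewrite <- !pow_mult, Nat.mul_comm; reflexivity).
    rewrite tech3 by nra. unfold Rdiv. rewrite <- (Rmult_1_l (/ (1 - s ^ 2))) at 2.
    apply Rmult_le_compat_r; [apply Rlt_le, Rinv_0_lt_compat; nra|].
    pose proof (pow_le (s ^ 2) (S N) ltac:(nra)). lra. }
  assert (Hpartial : forall N, E1 (c * s) N * E1 (c * s) N <= exp_sq_series c / (1 - s ^ 2)).
  { intros N. change (E1 (c * s) N) with (sum_f_R0 (exp_term (c * s)) N).
    rewrite (sum_eq _ (fun n => exp_term c n * s ^ n)) by (intros; apply exp_term_mult).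
    set (P := sum_f_R0 _ N). replace (P * P) with (P ^ 2) by ring.
    eapply Rle_trans; [now apply sum_mul_exp_term_sq_le|].
    apply Rmult_le_compat_l; [now apply exp_sq_series_nonneg | apply Hgeom]. }
  pose proof (Un_cv_le_const _ _ _ (CV_mult _ _ _ _ (E1_cvg (c * s)) (E1_cvg (c * s))) Hpartial) as Hlim.
  assert (0 < 1 - s ^ 2) by nra.
  apply Rmult_le_reg_r with (/ (1 - s ^ 2)); [now apply Rinv_0_lt_compat|].
  replace ((1 - s ^ 2) * exp (c * s) ^ 2 * / (1 - s ^ 2)) with (exp (c * s) * exp (c * s))
    by (field; lra).
  exact Hlim.
Qed.

Lemma exp_sq_series_lower_large (c : R) :
  21 / 10 <= c -> 61 / 100 * (exp c - 1) ^ 2 <= c ^ 2 * exp_sq_series c.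
Proof.
  intros Hc.
  set (s := 1 - / (2 * c)).
  assert (Hs : 0 <= s < 1).
  { unfold s. assert (0 < / (2 * c)) by (apply Rinv_0_lt_compat; lra).
    assert (/ (2 * c) * (2 * c) = 1) by (field; lra). nra. }
  pose proof (exp_sq_series_ge_geometric c s ltac:(lra) Hs) as Hgeom.
  assert (Hexp : exp (c * s) ^ 2 * exp 1 = exp c ^ 2).
  { replace (c * s) with (c - 1 / 2) by (unfold s; field; lra).
    rewrite <- !Rsqr_pow2. unfold Rsqr. rewrite <- !exp_plus. f_equal. lra. }
  assert (Hs2 : c ^ 2 * (1 - s ^ 2) = c - 1 / 4) by (unfold s; field; lra).
  assert (Hlow : (c - 1 / 4) * exp (c * s) ^ 2 <= c ^ 2 * exp_sq_series c).
  { rewrite <- Hs2, Rmult_assoc.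
    apply Rmult_le_compat_l; [apply pow2_ge_0 | exact Hgeom]. }
  pose proof exp_le_3. pose proof (exp_ineq1_le c). pose proof (pow2_ge_0 (exp (c * s))).
  nra.
Qed.

Lemma exp_sq_series_lower_small (c : R) :
  0 < c <= 21 / 10 -> 61 / 100 * (exp c - 1) ^ 2 <= c ^ 2 * exp_sq_series c.
Proof.
  intros Hc.
  (* Cauchy-Schwarz against [(c/(n+1))_(n<=5)], where 5369/3600 = \sum_(k=1..6) 1/k^2;
     the Taylor tail of [exp c] after degree 6 costs a factor 1 + 2 * 171/10000. *)
  set (X := sum_f_R0 (fun n => exp_term c (S n)) 5).
  assert (HX : X ^ 2 <= exp_sq_series c * (c ^ 2 * (5369 / 3600))).
  { pose proof (sum_mul_exp_term_sq_le c (fun n => c / INR (S n)) 5 ltac:(lra)) as H.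
    rewrite (sum_eq _ (fun n => exp_term c (S n))) in H
      by (intros n _; rewrite exp_term_S; ring).
    replace (sum_f_R0 (fun n => (c / INR (S n)) ^ 2) 5) with (c ^ 2 * (5369 / 3600)) in H
      by (cbn [sum_f_R0]; rewrite !S_INR; simpl; field).
    exact H. }
  assert (Hexp : exp c <= 1 + X + 2 * exp_term c 7).
  { pose proof (exp_le_sum_exp_term c 6 ltac:(lra) ltac:(rewrite !S_INR; simpl; lra)) as H.
    rewrite (decomp_sum _ 6), exp_term_0 in H by lia. exact H. }
  assert (HcX : c <= X).
  { unfold X. rewrite decomp_sum by lia.
    replace (exp_term c 1) with c by (rewrite exp_term_S, exp_term_0; simpl; field).
    pose proof (cond_pos_sum (fun i => exp_term c (S (S i))) 4
                  (fun i => exp_term_nonneg c _ ltac:(lra))).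
    simpl pred. lra. }
  assert (Htail : exp_term c 7 <= 171 / 10000 * c).
  { replace (exp_term c 7) with (c * c ^ 6 / 5040)
      by (rewrite !exp_term_S, exp_term_0, !S_INR; simpl; field).
    pose proof (pow_incr c (21 / 10) 6 ltac:(lra)).
    assert ((21 / 10) ^ 6 <= 86) by (simpl; lra).
    unfold Rdiv. nra. }
  pose proof (exp_ineq1_le c).
  pose proof (exp_sq_series_nonneg c ltac:(lra)).
  assert (HD : 0 <= exp c - 1 <= 10342 / 10000 * X) by lra.
  assert (HD2 : (exp c - 1) ^ 2 <= (10342 / 10000) ^ 2 * X ^ 2).
  { rewrite <- Rpow_mult_distr. apply pow_incr. exact HD. }
  assert (0 <= c ^ 2 * exp_sq_series c) by (apply Rmult_le_pos; [apply pow2_ge_0 | assumption]).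
  nra.
Qed.

Lemma six_div_PI_sqr_le : 6 / PI ^ 2 <= 61 / 100.
Proof.
  destruct (PI_2_3_7_ineq 1) as [H _].
  unfold tg_alt, PI_2_3_7_tg, Ratan_seq in H. simpl in H.
  assert (HPI : 600 / 61 <= PI ^ 2) by nra.
  apply Rmult_le_reg_r with (PI ^ 2); [pose proof PI_RGT_0; nra|].
  unfold Rdiv. rewrite Rmult_assoc, Rinv_l by (pose proof PI_RGT_0; nra). nra.
Qed.

Lemma exp_sq_series_lower (c : R) :
  0 < c -> 6 / PI ^ 2 * (exp c - 1) ^ 2 <= c ^ 2 * exp_sq_series c.
Proof.
  intros Hc. eapply Rle_trans.
  - apply Rmult_le_compat_r; [apply pow2_ge_0 | exact six_div_PI_sqr_le].
  - destruct (Rle_lt_dec c (21 / 10)).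
    + now apply exp_sq_series_lower_small.
    + apply exp_sq_series_lower_large; lra.
Qed.

Fixpoint resolvent (t r : R) (x : seqC) (n : nat) : C :=
  match n with
  | O => (t * x O)%C
  | S k => (t * (x (S k) + r * resolvent t r x k / INR (S k)))%C
  end.

Lemma RtoC_neq_0 (x : R) : x <> 0 -> RtoC x <> 0%C.
Proof. intros Hx E. apply Hx. now injection E. Qed.

Lemma RtoC_INR_S_neq_0 (n : nat) : RtoC (INR (S n)) <> 0%C.
Proof. apply RtoC_neq_0, not_0_INR, Nat.neq_succ_0. Qed.

Lemma opB_resolvent (t r : R) (x : seqC) : t <> 0 -> opB t r (resolvent t r x) = x.
Proof.
  intros Ht. apply functional_extensionality. intros [|k];
    unfold opB, shiftA; cbn [resolvent]; rewrite RtoC_inv by exact Ht.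
  - field. now apply RtoC_neq_0.
  - field. split; [apply RtoC_INR_S_neq_0 | now apply RtoC_neq_0].
Qed.

Lemma resolvent_opB (t r : R) (x : seqC) : t <> 0 -> resolvent t r (opB t r x) = x.
Proof.
  intros Ht. apply functional_extensionality. intros n.
  induction n as [|k IH]; cbn [resolvent]; [|rewrite IH];
    unfold opB, shiftA; rewrite RtoC_inv by exact Ht.
  - field. now apply RtoC_neq_0.
  - field. split; [apply RtoC_INR_S_neq_0 | now apply RtoC_neq_0].
Qed.

Lemma Cmod_resolvent_le (t r : R) (x : seqC) (m : nat) : 0 < t -> 0 <= r ->
  Cmod (resolvent t r x m) <=
  t * sum_f_R0 (fun j => Cmod (x j) * exp_term (r * t) (m - j)) m.
Proof.
  intros Ht Hr. set (c := r * t). assert (Hc : 0 <= c) by (unfold c; nra).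
  induction m as [|m IH]; cbn [resolvent].
  - rewrite Cmod_mult, Cmod_R, Rabs_pos_eq by lra. cbn [sum_f_R0].
    rewrite exp_term_0. lra.
  - assert (Hn : 0 < INR (S m)) by apply lt_0_INR, Nat.lt_0_succ.
    assert (Hstep : Cmod (x (S m) + r * resolvent t r x m / INR (S m))
                    <= Cmod (x (S m)) + r / INR (S m) * Cmod (resolvent t r x m)).
    { eapply Rle_trans; [apply Cmod_triangle|].
      rewrite Cmod_div, Cmod_mult, !Cmod_R, !Rabs_pos_eq by (lra || apply RtoC_INR_S_neq_0).
      right. field. lra. }
    assert (Hshift : c / INR (S m) * sum_f_R0 (fun j => Cmod (x j) * exp_term c (m - j)) m
                     <= sum_f_R0 (fun j => Cmod (x j) * exp_term c (S m - j)) m).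
    { rewrite scal_sum. apply sum_Rle. intros j Hj.
      rewrite (Nat.sub_succ_l j m Hj), exp_term_S.
      assert (INR (S (m - j)) <= INR (S m)) by (apply le_INR; lia).
      assert (0 < INR (S (m - j))) by apply lt_0_INR, Nat.lt_0_succ.
      assert (Hratio : c / INR (S m) <= c / INR (S (m - j))).
      { unfold Rdiv. apply Rmult_le_compat_l; [exact Hc|]. now apply Rinv_le_contravar. }
      rewrite (Rmult_comm (c / _)), Rmult_assoc.
      apply Rmult_le_compat_l; [apply Cmod_ge_0|].
      apply Rmult_le_compat_l; [now apply exp_term_nonneg | exact Hratio]. }
    rewrite Cmod_mult, Cmod_R, Rabs_pos_eq by lra. cbn [sum_f_R0].
    rewrite Nat.sub_diag, exp_term_0.
    apply Rmult_le_compat_l; [lra|]. eapply Rle_trans; [exact Hstep|].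
    assert (r / INR (S m) * Cmod (resolvent t r x m)
            <= c / INR (S m) * sum_f_R0 (fun j => Cmod (x j) * exp_term c (m - j)) m).
    { unfold c. replace (r * t / INR (S m) * _)
        with (r / INR (S m) * (t * sum_f_R0 (fun j => Cmod (x j) * exp_term (r * t) (m - j)) m))
        by (field; lra).
      apply Rmult_le_compat_l; [apply Rdiv_le_0_compat; lra | exact IH]. }
    lra.
Qed.

(* Young's inequality for the convolution bound of [Cmod_resolvent_le]: Jensen on
   each term, then the Cauchy product of [Cmod x ^ 2] with the series of [exp]. *)
Lemma resolvent_l2 (t r : R) (x : seqC) : 0 < t -> 0 <= r -> l2 x ->
  ex_series (fun n => Cmod (resolvent t r x n) ^ 2) /\
  Series (fun n => Cmod (resolvent t r x n) ^ 2)
    <= (t * exp (r * t)) ^ 2 * Series (fun n => Cmod (x n) ^ 2).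
Proof.
  intros Ht Hr Hx. set (c := r * t). assert (Hc : 0 <= c) by (unfold c; nra).
  set (conv := fun m => sum_f_R0 (fun j => Cmod (x j) ^ 2 * exp_term c (m - j)) m).
  assert (Hconv : is_series conv (Series (fun n => Cmod (x n) ^ 2) * exp c)).
  { apply is_series_mult_pos.
    - now apply Series_correct.
    - apply is_series_Reals, E1_cvg.
    - intros; apply pow2_ge_0.
    - intros; now apply exp_term_nonneg. }
  assert (Hpoint : forall m, Cmod (resolvent t r x m) ^ 2 <= conv m * (t ^ 2 * exp c)).
  { intros m. eapply Rle_trans.
    { apply pow_incr. split; [apply Cmod_ge_0 | now apply Cmod_resolvent_le]. }
    fold c. rewrite Rpow_mult_distr.
    rewrite (sum_eq _ (fun j => exp_term c (m - j) * Cmod (x j))) by (intros; ring).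
    pose proof (sum_f_R0_weighted_sq_le (fun j => exp_term c (m - j)) (fun j => Cmod (x j)) m
                  (fun j => exp_term_nonneg c _ Hc)) as Hjensen.
    rewrite sum_f_R0_rev in Hjensen.
    pose proof (sum_exp_term_le_exp c m Hc).
    assert (0 <= conv m) by (apply cond_pos_sum; intros j;
      apply Rmult_le_pos; [apply pow2_ge_0 | now apply exp_term_nonneg]).
    rewrite (sum_eq (fun j => exp_term c (m - j) * Cmod (x j) ^ 2)
                   (fun j => Cmod (x j) ^ 2 * exp_term c (m - j))) in Hjensen by (intros; ring).
    fold (conv m) in Hjensen.
    replace (conv m * (t ^ 2 * exp c)) with (t ^ 2 * (exp c * conv m)) by ring.
    apply Rmult_le_compat_l; [apply pow2_ge_0|].
    eapply Rle_trans; [exact Hjensen|]. now apply Rmult_le_compat_r. }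
  assert (Hbound : ex_series (fun m => conv m * (t ^ 2 * exp c)))
    by (apply ex_series_scal_r; eexists; exact Hconv).
  split.
  - refine (@ex_series_le R_AbsRing R_CompleteNormedModule _ _ _ Hbound). intros m.
    change (norm _) with (Rabs (Cmod (resolvent t r x m) ^ 2)).
    rewrite Rabs_pos_eq by apply pow2_ge_0. apply Hpoint.
  - eapply Rle_trans.
    + apply (Series_le _ _ (fun m => conj (pow2_ge_0 _) (Hpoint m)) Hbound).
    + rewrite Series_scal_r, (is_series_unique _ _ Hconv). right. fold c. ring.
Qed.

Lemma l2norm_resolvent_le (t r : R) (x : seqC) : 0 < t -> 0 <= r -> l2 x ->
  l2norm (resolvent t r x) <= t * exp (r * t) * l2norm x.
Proof.
  intros Ht Hr Hx. destruct (resolvent_l2 t r x Ht Hr Hx) as [_ Hle].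
  unfold l2norm. pose proof (exp_pos (r * t)).
  rewrite <- (sqrt_pow2 (t * exp (r * t))) by nra. rewrite <- sqrt_mult_alt by apply pow2_ge_0.
  now apply sqrt_le_1_alt.
Qed.

Definition e0 : seqC := fun n => match n with O => 1%C | S _ => 0%C end.

Lemma e0_l2 : l2 e0 /\ l2norm e0 = 1.
Proof.
  assert (Hsum : forall N, sum_f_R0 (fun n => Cmod (e0 n) ^ 2) N = 1).
  { induction N as [|N IH]; cbn [sum_f_R0 e0]; [rewrite Cmod_1 | rewrite IH, Cmod_0]; ring. }
  assert (Hser : is_series (fun n => Cmod (e0 n) ^ 2) 1).
  { apply is_series_Reals, is_lim_seq_Reals.
    eapply is_lim_seq_ext; [intros N; symmetry; apply Hsum | apply is_lim_seq_const]. }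
  split; [now exists 1|].
  unfold l2norm. rewrite (is_series_unique _ _ Hser). apply sqrt_1.
Qed.

Lemma resolvent_e0 (t r : R) (n : nat) : resolvent t r e0 n = RtoC (t * exp_term (r * t) n).
Proof.
  induction n as [|n IH]; cbn [resolvent e0].
  - rewrite exp_term_0, Rmult_1_r. ring.
  - rewrite IH, exp_term_S, !RtoC_mult, RtoC_div by apply not_0_INR, Nat.neq_succ_0.
    rewrite !RtoC_mult. field. apply RtoC_INR_S_neq_0.
Qed.

Lemma l2norm_resolvent_e0_ge (t r : R) : 0 < t -> 0 < r ->
  sqrt 6 / (PI * r) * (exp (r * t) - 1) <= l2norm (resolvent t r e0).
Proof.
  intros Ht Hr. set (c := r * t). assert (Hc : 0 < c) by (unfold c; nra).
  assert (Hnorm : l2norm (resolvent t r e0) = sqrt (t ^ 2 * exp_sq_series c)).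
  { unfold l2norm, exp_sq_series. f_equal. rewrite <- Series_scal_l. apply Series_ext.
    intros n. rewrite resolvent_e0, Cmod_R, pow2_abs. fold c. ring. }
  rewrite Hnorm. pose proof PI_RGT_0. pose proof (exp_ineq1_le c).
  assert (HL : 0 <= sqrt 6 / (PI * r) * (exp c - 1)).
  { apply Rmult_le_pos; [|lra]. apply Rdiv_le_0_compat; [apply sqrt_pos | nra]. }
  rewrite <- (sqrt_pow2 _ HL). apply sqrt_le_1_alt.
  replace ((sqrt 6 / (PI * r) * (exp c - 1)) ^ 2)
    with (/ r ^ 2 * (6 / PI ^ 2 * (exp c - 1) ^ 2))
    by (rewrite !Rpow_mult_distr; unfold Rdiv; rewrite Rpow_mult_distr, pow2_sqrt by lra;
        field; split; lra).
  replace (t ^ 2 * exp_sq_series c) with (/ r ^ 2 * (c ^ 2 * exp_sq_series c))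
    by (unfold c; field; lra).
  apply Rmult_le_compat_l; [apply Rlt_le, Rinv_0_lt_compat; nra|].
  now apply exp_sq_series_lower.
Qed.

Theorem lemma3p2 (t r : R) (ht : 0 < t) (hr : 0 < r) :
  exists S : seqC -> seqC,
    (forall x, l2 x -> l2 (S x)) /\
    (forall x, l2 x -> S (opB t r x) = x) /\
    (forall x, l2 x -> opB t r (S x) = x) /\
    Rbar_le (Finite (sqrt 6 / (PI * r) * (exp (r * t) - 1))) (opnorm S) /\
    Rbar_le (opnorm S) (Finite (t * exp (r * t))).
Proof.
  exists (resolvent t r). unfold opnorm.
  destruct (Lub_Rbar_correct
              (fun y => exists x, l2 x /\ l2norm x <= 1 /\ y = l2norm (resolvent t r x)))
    as [Hub Hleast].
  split; [|split; [|split; [|split]]].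
  - intros x Hx. exact (proj1 (resolvent_l2 t r x ht (Rlt_le _ _ hr) Hx)).
  - intros x _. apply resolvent_opB. lra.
  - intros x _. apply opB_resolvent. lra.
  - destruct e0_l2 as [He0 Hn0].
    eapply Rbar_le_trans; [|apply Hub; exists e0; split; [exact He0 | split; [lra | reflexivity]]].
    now apply l2norm_resolvent_e0_ge.
  - apply Hleast. intros y (x & Hx & Hn & ->).
    eapply Rle_trans; [apply l2norm_resolvent_le; auto; lra|].
    pose proof (exp_pos (r * t)).
    rewrite <- (Rmult_1_r (t * exp (r * t))) at 2.
    apply Rmult_le_compat_l; [nra | exact Hn].
Qed.
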